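(* Let $K\ge1$, let $g_1,\dots,g_K$ be positive integers, let $w\in\mathbb{C}$ and $y_{i,\ell}\in\mathbb{C}$ ($1\le i\le K$, $1\le\ell\le g_i$). Treat $x$ and $\overline{x}$ as two independent variables, and for a rational function $R(x,\overline{x})$ let $\overline{R}$ denote the function obtained by conjugating all coefficients and interchanging the roles of $x$ and $\overline{x}$. Define recursively $$Q_1=-\sum_{\ell=1}^{g_1}\frac{1}{\overline{x}-\overline{y_{1,\ell}}},\qquad Q_j=-\sum_{\ell=1}^{g_j}\frac{1}{\overline{x}-\overline{y_{j,\ell}}+\sum_{i=1}^{j-1}\overline{Q_i}}\quad(2\le j\le K),$$ $$D_1=\prod_{\ell=1}^{g_1}(\overline{x}-\overline{y_{1,\ell}}),\qquad D_j=\prod_{\ell=1}^{g_j}\Big(\overline{x}-\overline{y_{j,\ell}}+\sum_{i=1}^{j-1}\overline{Q_i}\Big)\cdot\Big(\prod_{k=1}^{j-1}\overline{D_k}\Big)^{g_j}\quad(2\le j\le K),$$ (each $D_j$ is a polynomial in $x,\overline{x}$), and set $$P=\Big(x-w+\sum_{k=1}^K Q_k\Big)\prod_{i=1}^K D_i,\qquad \hat P=(x-w)\prod_{i=1}^K D_i .$$ Let $F(Z)=\prod_{i=1}^K(1+g_iZ)$, $E_K=\frac{F(1)+F(-1)}{2}$ and $O_K=\frac{F(1)-F(-1)}{2}$. Then (a) $\deg(P)=\deg(\hat P)$; (b) $\deg(P)=(E_K,O_K)$.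
   Context: For a polynomial $\rho$ in two variables $x,\overline{x}$, the degree vector is $\deg(\rho)=(\deg_x\rho,\deg_{\overline{x}}\rho)$, where $\deg_x\rho$ is the highest exponent of $x$ appearing in $\rho$ and $\deg_{\overline{x}}\rho$ the highest exponent of $\overline{x}$. The polynomial $P$ is the ''lensing polynomial'' obtained by clearing denominators in the multiplane point-mass lensing equation, with all masses and inter-plane scaling constants set equal to $1$. *)

From HB Require Import structures.
From mathcomp Require Import all_boot all_order all_algebra polyXY fraction.
From mathcomp Require Import generic_quotient.
From mathcomp Require Export complex.
From mathcomp Require Export reals.
Set Implicit Arguments. Unset Strict Implicit. Unset Printing Implicit Defensive.
Import Order.TTheory GRing.Theory Num.Theory.
Local Open Scope ring_scope.

Section Lensing.
Variable C : numClosedFieldType.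

(* Bivariate polynomials: the outer variable 'X of {poly {poly C}} is x,
   the inner variable 'Y (= 'X%:P, see polyXY.v) is xbar. *)
Definition bipoly := {poly {poly C}}.
Definition rfun := {fraction {poly {poly C}}}.

Definition tofr (p : bipoly) : rfun := FracField.tofrac p.

Definition Xr : rfun := tofr 'X.
Definition Xbr : rfun := tofr 'Y.
Definition cstr (c : C) : rfun := tofr (c%:P%:P).

Definition deg_x (p : bipoly) : nat := (size p).-1.
Definition deg_xb (p : bipoly) : nat := (sizeY p).-1.
Definition degv (p : bipoly) : nat * nat := (deg_x p, deg_xb p).

Definition barP (p : bipoly) : bipoly :=
  swapXY (map_poly (map_poly (@Num.conj_op C)) p).

(* bar on rational functions: apply barP to numerator and denominator of a
   representative (well defined since barP is an injective ring map) *)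
Definition barF (f : rfun) : rfun :=
  let r := repr f in tofr (barP (frac r).1) / tofr (barP (frac r).2).

(* QDs g y j = [:: (Q_1, D_1); ...; (Q_j, D_j)]  (0-based indices in g, y:
   the paper's Q_{j+1} uses g j and y j l, l < g j). *)
Fixpoint QDs (g : nat -> nat) (y : nat -> nat -> C) (j : nat)
  : seq (rfun * rfun) :=
  match j with
  | 0 => [::]
  | j'.+1 =>
      let s := QDs g y j' in
      let sQ := \sum_(qd <- s) barF qd.1 in
      let Qj := - \sum_(l < g j') (Xbr - cstr (y j' l)^* + sQ)^-1 in
      let Dj := (\prod_(l < g j') (Xbr - cstr (y j' l)^* + sQ))
                 * (\prod_(qd <- s) barF qd.2) ^+ g j' in
      rcons s (Qj, Dj)
  end.

Definition Pfun (K : nat) (g : nat -> nat) (w : C) (y : nat -> nat -> C) : rfun :=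
  (Xr - cstr w + \sum_(qd <- QDs g y K) qd.1) * \prod_(qd <- QDs g y K) qd.2.

Definition Phatfun (K : nat) (g : nat -> nat) (w : C) (y : nat -> nat -> C) : rfun :=
  (Xr - cstr w) * \prod_(qd <- QDs g y K) qd.2.

End Lensing.

Definition Fpoly (K : nat) (g : nat -> nat) (z : rat) : rat :=
  \prod_(i < K) (1 + (g i)%:R * z).
Definition EK (K : nat) (g : nat -> nat) : rat := (Fpoly K g 1 + Fpoly K g (-1)) / 2.
Definition OK (K : nat) (g : nat -> nat) : rat := (Fpoly K g 1 - Fpoly K g (-1)) / 2.

From mathcomp Require Import all_boot all_order all_algebra polyXY fraction.
From mathcomp Require Import complex reals.
From mathcomp Require Import generic_quotient ring.
Set Implicit Arguments. Unset Strict Implicit. Unset Printing Implicit Defensive.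
Import Order.TTheory GRing.Theory Num.Theory.
Local Open Scope ring_scope.

(* Clear denominators step by step: D_1 ... D_j = Pi_j and Q_1 + ... + Q_j =
   Qn_j / Pi_j for bivariate polynomials where Qn_j is dominated by Pi_j, i.e.
   deg_x Qn_j <= deg_x Pi_j and deg_xbar Qn_j < deg_xbar Pi_j.  Each factor of
   D_(j+1) is L_l = (xbar - conj y_l) bar(Pi_j) + bar(Qn_j), of degree vector
   (deg_xbar Pi_j, deg_x Pi_j + 1), and Q_(j+1) = N / D_(j+1) with N dominated
   by D_(j+1); so dominance is preserved.  Hence the degree vector (a, b) of
   (x - w) Pi_j evolves as (a, b) -> (a + g b, b + g a): a + b and a - b get
   multiplied by 1 + g and 1 - g, whence a = E_K and b = O_K.  Finally
   P = (x - w) Pi_K + Qn_K has the same degree vector as Phat = (x - w) Pi_K. *)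

Lemma size_prod_const (R : idomainType) n k (F : 'I_k -> {poly R}) :
  (forall i, size (F i) = n.+1) -> size (\prod_(i < k) F i) = (k * n).+1.
Proof.
move=> sF; rewrite size_prod => [|i _]; last by rewrite -size_poly_eq0 sF.
by rewrite (eq_bigr (fun=> n.+1)) // sum_nat_const !card_ord mulnS -addnS addKn.
Qed.

Section BivariateSize.
Variable R : idomainType.
Implicit Types (p q r : {poly {poly R}}) (c : R).

Lemma sizeY_mul p q : p != 0 -> q != 0 -> sizeY (p * q) = (sizeY p + sizeY q).-1.
Proof. by move=> p0 q0; rewrite !sizeYE rmorphM size_mul ?swapXY_eq0. Qed.

Lemma sizeY_polyMleq p q : (sizeY (p * q) <= (sizeY p + sizeY q).-1)%N.
Proof. by rewrite !sizeYE rmorphM size_polyMleq. Qed.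

Lemma sizeY_polyD p q : (sizeY (p + q) <= maxn (sizeY p) (sizeY q))%N.
Proof. by rewrite !sizeYE raddfD size_polyD. Qed.

Lemma sizeY_polyDl p q : (sizeY q < sizeY p)%N -> sizeY (p + q) = sizeY p.
Proof. by rewrite !sizeYE raddfD; apply: size_polyDl. Qed.

Lemma sizeY_polyN p : sizeY (- p) = sizeY p.
Proof. by rewrite !sizeYE raddfN size_polyN. Qed.

Lemma sizeY_prod_const n k (F : 'I_k -> {poly {poly R}}) :
  (forall i, sizeY (F i) = n.+1) -> sizeY (\prod_(i < k) F i) = (k * n).+1.
Proof.
by move=> sF; rewrite sizeYE rmorph_prod; apply: size_prod_const => i; rewrite -sizeYE.
Qed.

Lemma size_YsubC c : size ('Y - c%:P%:P : {poly {poly R}}) = 1%N.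
Proof. by rewrite -polyCB size_polyC -size_poly_eq0 size_XsubC. Qed.

Lemma sizeY_YsubC c : sizeY ('Y - c%:P%:P : {poly {poly R}}) = 2%N.
Proof. by rewrite sizeYE raddfB /= swapXY_Y swapXY_polyC map_polyC size_XsubC. Qed.

Lemma sizeY_XsubC c : sizeY ('X - c%:P%:P : {poly {poly R}}) = 1%N.
Proof.
rewrite sizeYE raddfB /= swapXY_X swapXY_polyC map_polyC /= -polyCB.
by rewrite size_polyC -size_poly_eq0 size_XsubC.
Qed.

Definition dominated q p := (size q <= size p)%N && (sizeY q < sizeY p)%N.

Lemma dominated_neq0 q p : dominated q p -> p != 0.
Proof. by case/andP=> _ /(leq_ltn_trans (leq0n _)); rewrite lt0n sizeY_eq0. Qed.

Lemma dominated0 p : p != 0 -> dominated 0 p.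
Proof.
by move=> p0; rewrite /dominated size_poly0 sizeYE raddf0 size_poly0 lt0n sizeY_eq0.
Qed.

Lemma dominatedN q p : dominated (- q) p = dominated q p.
Proof. by rewrite /dominated size_polyN sizeY_polyN. Qed.

Lemma dominatedD q1 q2 p :
  dominated q1 p -> dominated q2 p -> dominated (q1 + q2) p.
Proof.
case/andP=> s1 y1 /andP[s2 y2]; apply/andP; split.
  by apply: leq_trans (size_polyD _ _) _; rewrite geq_max s1 s2.
by apply: leq_ltn_trans (sizeY_polyD _ _) _; rewrite gtn_max y1 y2.
Qed.

Lemma dominated_sum I (s : seq I) (F : I -> {poly {poly R}}) p : p != 0 ->
  (forall i, dominated (F i) p) -> dominated (\sum_(i <- s) F i) p.
Proof.
move=> p0 dF; elim/big_ind: _ => //; first exact: dominated0.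
by move=> q1 q2; apply: dominatedD.
Qed.

Lemma dominatedMr q p r : r != 0 -> dominated q p -> dominated (q * r) (p * r).
Proof.
move=> r0 qp; have p0 := dominated_neq0 qp; case/andP: qp => sqp yqp.
have [sr_gt0 yr_gt0] : (0 < size r)%N /\ (0 < sizeY r)%N.
  by rewrite !lt0n sizeY_eq0 size_poly_eq0.
apply/andP; split.
  apply: leq_trans (size_polyMleq q r) _.
  by rewrite size_mul // -(prednK sr_gt0) !addnS leq_add2r.
apply: leq_ltn_trans (sizeY_polyMleq q r) _.
by rewrite sizeY_mul // -(prednK yr_gt0) !addnS ltn_add2r.
Qed.

Lemma dominatedMl q p r : r != 0 -> dominated q p -> dominated (r * q) (r * p).
Proof. by rewrite ![r * _]mulrC; apply: dominatedMr. Qed.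

End BivariateSize.

Section Conjugation.
Variable C : numClosedFieldType.
Local Notation BP := {poly {poly C}}.
Implicit Types (p q : BP) (f h : rfun C).

Lemma barP0 : barP (0 : BP) = 0. Proof. by rewrite /barP !raddf0. Qed.
Lemma barP1 : barP (1 : BP) = 1. Proof. by rewrite /barP !rmorph1. Qed.
Lemma barPD p q : barP (p + q) = barP p + barP q. Proof. by rewrite /barP !raddfD. Qed.
Lemma barPM p q : barP (p * q) = barP p * barP q. Proof. by rewrite /barP !rmorphM. Qed.

Lemma sizeY_map_conj p : sizeY (map_poly (map_poly Num.Def.conjC) p) = sizeY p.
Proof.
rewrite /sizeY size_map_inj_poly ?rmorph0 //; last first.
  by apply: can_inj (map_polyK _ _); [exact: conjCK | exact: rmorph0].
apply: eq_bigr => i _; rewrite coef_map size_map_inj_poly //.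
  exact: (can_inj (@conjCK C)).
exact: rmorph0.
Qed.

Lemma size_barP p : size (barP p) = sizeY p.
Proof. by rewrite -sizeYE sizeY_map_conj. Qed.

Lemma sizeY_barP p : sizeY (barP p) = size p.
Proof.
rewrite sizeYE swapXYK size_map_inj_poly ?rmorph0 //.
by apply: can_inj (map_polyK _ _); [exact: conjCK | exact: rmorph0].
Qed.

Lemma barP_eq0 p : (barP p == 0) = (p == 0).
Proof. by rewrite -size_poly_eq0 size_barP sizeY_eq0. Qed.

Lemma tofr_eq0 p : (tofr p == 0) = (p == 0).
Proof. exact: tofrac_eq0. Qed.

Lemma tofr_addf_div (a b c d : BP) : b != 0 -> d != 0 ->
  tofr a / tofr b + tofr c / tofr d = tofr (a * d + c * b) / tofr (b * d).
Proof. by move=> b0 d0; rewrite addf_div ?tofr_eq0 // /tofr tofracD !tofracM. Qed.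

Lemma repr_fracE f : tofr \n_(repr f) / tofr \d_(repr f) = f.
Proof.
have d_neq0 : tofr \d_(repr f) != 0 by rewrite tofr_eq0 denom_ratioP.
apply: (canLR (mulfK d_neq0)); set x := repr f; rewrite -[f]reprK -/x /tofr.
unlock FracField.tofrac; rewrite !piE; apply/eqmodP.
rewrite /= FracField.equivfE /FracField.mulf.
by rewrite !numden_Ratio ?mulf_neq0 ?oner_eq0 ?denom_ratioP // mulr1 mul1r.
Qed.

Lemma barF_frac p q : q != 0 ->
  barF (tofr p / tofr q) = tofr (barP p) / tofr (barP q).
Proof.
move=> q_neq0; rewrite /barF; set r := repr _.
have d_neq0 : \d_r != 0 by apply: denom_ratioP.
have /eqP cross : \n_r * q == p * \d_r.
  have := repr_fracE (tofr p / tofr q); rewrite -/r => /eqP.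
  by rewrite eqr_div ?tofr_eq0 // /tofr -!tofracM tofrac_eq.
apply/eqP; rewrite eqr_div ?tofr_eq0 ?barP_eq0 //.
by rewrite /tofr -!tofracM -!barPM cross.
Qed.

Lemma barF_tofr p : barF (tofr p) = tofr (barP p).
Proof. by have := barF_frac p (oner_neq0 _); rewrite barP1 /tofr tofrac1 !divr1. Qed.

Lemma barF0 : barF (0 : rfun C) = 0.
Proof. by have := barF_tofr 0; rewrite barP0 /tofr tofrac0. Qed.

Lemma barF1 : barF (1 : rfun C) = 1.
Proof. by have := barF_tofr 1; rewrite barP1 /tofr tofrac1. Qed.

Lemma barFD f h : barF (f + h) = barF f + barF h.
Proof.
rewrite -[f]repr_fracE -[h]repr_fracE.
case: (repr f) (repr h) => -[a b] /= b0 [[c d] /= d0].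
transitivity (barF (tofr (a * d + c * b) / tofr (b * d))).
  by congr barF; apply: tofr_addf_div.
rewrite !barF_frac ?mulf_neq0 // tofr_addf_div ?barP_eq0 //.
by rewrite barPD !barPM.
Qed.

Lemma barFM f h : barF (f * h) = barF f * barF h.
Proof.
rewrite -[f]repr_fracE -[h]repr_fracE.
case: (repr f) (repr h) => -[a b] /= b0 [[c d] /= d0].
transitivity (barF (tofr (a * c) / tofr (b * d))).
  by congr barF; rewrite /tofr !tofracM mulf_div.
by rewrite !barF_frac ?mulf_neq0 // !barPM /tofr !tofracM mulf_div.
Qed.

Lemma barF_sum I (r : seq I) (F : I -> rfun C) :
  barF (\sum_(i <- r) F i) = \sum_(i <- r) barF (F i).
Proof. exact: (big_morph _ barFD barF0). Qed.

Lemma barF_prod I (r : seq I) (F : I -> rfun C) :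
  barF (\prod_(i <- r) F i) = \prod_(i <- r) barF (F i).
Proof. exact: (big_morph _ barFM barF1). Qed.

End Conjugation.

Section LensStep.
Variables (C : numClosedFieldType) (n : nat) (c : 'I_n -> C).
Variables Pi Qn : {poly {poly C}}.

Definition lensL (l : 'I_n) := ('Y - (c l)%:P%:P) * barP Pi + barP Qn.
Definition lensD := \prod_(l < n) lensL l.
Definition lensN := - (barP Pi * \sum_(l < n) \prod_(m < n | m != l) lensL m).

Lemma lensD_split l : lensD = lensL l * \prod_(m < n | m != l) lensL m.
Proof. exact: bigD1. Qed.

Hypothesis Pi_neq0 : Pi != 0.

Lemma lensL_frac l :
  Xbr C - cstr (c l) + barF (tofr Qn / tofr Pi) = tofr (lensL l) / tofr (barP Pi).
Proof.
rewrite barF_frac // /lensL /Xbr /cstr /tofr tofracD tofracM mulrDl.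
by rewrite mulfK ?tofrac_eq0 ?barP_eq0 // tofracB.
Qed.

Lemma lensD_frac :
  \prod_(l < n) (Xbr C - cstr (c l) + barF (tofr Qn / tofr Pi)) * barF (tofr Pi) ^+ n
  = tofr lensD.
Proof.
under eq_bigr do rewrite lensL_frac.
rewrite barF_tofr prodf_div prodr_const card_ord divfK; last first.
  by rewrite expf_neq0 // tofr_eq0 barP_eq0.
by rewrite /lensD /tofr rmorph_prod.
Qed.

Lemma lensN_frac : lensD != 0 ->
  - \sum_(l < n) (Xbr C - cstr (c l) + barF (tofr Qn / tofr Pi))^-1
  = tofr lensN / tofr lensD.
Proof.
move=> D_neq0; under eq_bigr do rewrite lensL_frac invf_div.
rewrite /lensN /tofr tofracN tofracM rmorph_sum mulNr mulr_sumr mulr_suml.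
congr (- _); apply: eq_bigr => l _.
move: D_neq0; rewrite (lensD_split l) mulf_eq0 => /norP[_ R_neq0].
by rewrite tofracM invfM mulrACA divff ?mulr1 // tofrac_eq0.
Qed.

Variables a b : nat.
Hypotheses (size_Pi : size Pi = a) (sizeY_Pi : sizeY Pi = b.+1)
  (Qn_dominated : dominated Qn Pi).

Lemma size_lensL l : size (lensL l) = b.+1 /\ sizeY (lensL l) = a.+1.
Proof.
have bPi_neq0 : barP Pi != 0 by rewrite barP_eq0 (dominated_neq0 Qn_dominated).
case/andP: Qn_dominated => sQn yQn.
have Yc_neq0 : 'Y - (c l)%:P%:P != 0 :> {poly {poly C}}.
  by rewrite -size_poly_eq0 size_YsubC.
have size_YcPi : size (('Y - (c l)%:P%:P) * barP Pi) = b.+1.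
  by rewrite -polyCB size_Cmul ?size_barP // -size_poly_eq0 size_XsubC.
have sizeY_YcPi : sizeY (('Y - (c l)%:P%:P) * barP Pi) = a.+1.
  by rewrite sizeY_mul // sizeY_YsubC sizeY_barP size_Pi.
rewrite /lensL size_polyDl ?sizeY_polyDl ?size_YcPi ?sizeY_YcPi //.
  by rewrite sizeY_barP ltnS -size_Pi.
by rewrite size_barP -sizeY_Pi.
Qed.

Lemma size_lensD : size lensD = (n * b).+1 /\ sizeY lensD = (n * a).+1.
Proof.
by split; [apply: size_prod_const | apply: sizeY_prod_const] => l;
  case: (size_lensL l).
Qed.

Lemma dominated_lensN : dominated lensN lensD.
Proof.
have D_neq0 : lensD != 0 by rewrite -size_poly_eq0 (proj1 size_lensD).
rewrite /lensN dominatedN mulr_sumr; apply: dominated_sum => // l.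
move: (D_neq0); rewrite (lensD_split l) mulf_eq0 => /norP[_ R_neq0].
apply: dominatedMr => //; case: (size_lensL l) => sL yL.
by rewrite /dominated size_barP sizeY_barP sL yL sizeY_Pi size_Pi leqnn ltnSn.
Qed.

End LensStep.

Fixpoint lens_deg (g : nat -> nat) j : nat * nat :=
  if j is j'.+1 then
    let: (a, b) := lens_deg g j' in (a + g j' * b, b + g j' * a)%N
  else (1, 0)%N.

Lemma lens_deg_EK_OK g K :
  (((lens_deg g K).1)%:R, ((lens_deg g K).2)%:R) = (EK K g, OK K g) :> rat * rat.
Proof.
have sum_diff j : (lens_deg g j).1%:R + (lens_deg g j).2%:R = Fpoly j g 1 /\
                  (lens_deg g j).1%:R - (lens_deg g j).2%:R = Fpoly j g (-1).
  elim: j => [|j IH]; first by rewrite /Fpoly !big_ord0 /= mulr0n addr0.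
  rewrite /Fpoly !big_ord_recr /= -/(Fpoly j g 1) -/(Fpoly j g (-1)).
  move: IH; case: (lens_deg g j) => a b /= [<- <-]; rewrite !natrD !natrM.
  by split; ring.
rewrite /EK /OK; case: (sum_diff K) => <- <-.
by congr pair; field.
Qed.

Section Lens.
Variables (C : numClosedFieldType) (g : nat -> nat) (y : nat -> nat -> C).

Fixpoint QDpoly j : {poly {poly C}} * {poly {poly C}} :=
  if j is j'.+1 then
    let: (Qn, Pi) := QDpoly j' in
    let c (l : 'I_(g j')) := (y j' l)^* in
    (Qn * lensD c Pi Qn + lensN c Pi Qn * Pi, Pi * lensD c Pi Qn)
  else (0, 1).

Lemma QDpoly_size j :
  [/\ size (QDpoly j).2 = (lens_deg g j).1, sizeY (QDpoly j).2 = (lens_deg g j).2.+1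
    & dominated (QDpoly j).1 (QDpoly j).2].
Proof.
elim: j => [|j].
  by rewrite /= size_poly1 sizeYE rmorph1 size_poly1 dominated0 ?oner_eq0.
rewrite /=; case: (QDpoly j) (lens_deg g j) => Qn Pi [a b] /= [sPi yPi dom].
set c := fun l : 'I_(g j) => (y j l)^*.
have [sD yD] := size_lensD c sPi yPi dom.
have D_neq0 : lensD c Pi Qn != 0 by rewrite -size_poly_eq0 sD.
have Pi_neq0 := dominated_neq0 dom.
split.
- by rewrite size_mul // sPi sD addnS.
- by rewrite sizeY_mul // yPi yD addSn addnS.
apply: dominatedD; first exact: dominatedMr.
by rewrite mulrC; apply: dominatedMl => //; apply: dominated_lensN sPi yPi dom.
Qed.

Lemma QDs_frac j :
  \sum_(qd <- QDs g y j) qd.1 = tofr (QDpoly j).1 / tofr (QDpoly j).2 /\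
  \prod_(qd <- QDs g y j) qd.2 = tofr (QDpoly j).2.
Proof.
elim: j => [|j]; first by rewrite !big_nil /tofr tofrac0 tofrac1 mul0r.
have [] := QDpoly_size j; rewrite /= !big_rcons /= -barF_sum -barF_prod.
case: (QDpoly j) (lens_deg g j) => Qn Pi [a b] /= sPi yPi dom [-> ->].
set c := fun l : 'I_(g j) => (y j l)^*.
have [sD _] := size_lensD c sPi yPi dom.
have D_neq0 : lensD c Pi Qn != 0 by rewrite -size_poly_eq0 sD.
have Pi_neq0 := dominated_neq0 dom.
rewrite (lensN_frac Pi_neq0 D_neq0) (lensD_frac c Qn Pi_neq0).
by rewrite tofr_addf_div // /tofr tofracM.
Qed.
End Lens.

Lemma degv_mulXsubC (C : numClosedFieldType) (w : C) (p : {poly {poly C}}) :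
  p != 0 -> degv (('X - w%:P%:P) * p) = (size p, (sizeY p).-1).
Proof.
move=> p0; have Xw_neq0 : 'X - w%:P%:P != 0 by rewrite -size_poly_eq0 size_XsubC.
by rewrite /degv /deg_x /deg_xb size_mul // sizeY_mul // size_XsubC sizeY_XsubC.
Qed.

Lemma degv_mulXsubC_add (C : numClosedFieldType) (w : C) (p q : {poly {poly C}}) :
  dominated q p -> degv (('X - w%:P%:P) * p + q) = degv (('X - w%:P%:P) * p).
Proof.
move=> qp; have p0 := dominated_neq0 qp; have Xw_neq0 : 'X - w%:P%:P != 0.
  by rewrite -size_poly_eq0 size_XsubC.
case/andP: qp => sq yq.
rewrite /degv /deg_x /deg_xb size_polyDl ?sizeY_polyDl //.
  by rewrite sizeY_mul // sizeY_XsubC.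
by rewrite size_mul // size_XsubC.
Qed.

Lemma Pfun_Phatfun_degv (C : numClosedFieldType) K g (w : C) y :
  exists p ph : {poly {poly C}},
    [/\ tofr p = Pfun K g w y, tofr ph = Phatfun K g w y,
        degv p = lens_deg g K & degv ph = lens_deg g K].
Proof.
have [] := QDpoly_size g y K; have [] := QDs_frac g y K.
case: (QDpoly g y K) (lens_deg g K) => Qn Pi [a b] /= sumQ prodD sPi yPi dom.
have Pi_neq0 := dominated_neq0 dom.
have degv_XwPi : degv (('X - w%:P%:P) * Pi) = (a, b).
  by rewrite degv_mulXsubC // sPi yPi.
exists (('X - w%:P%:P) * Pi + Qn), (('X - w%:P%:P) * Pi); split=> //.
- rewrite /Pfun sumQ prodD [RHS]mulrDl divfK ?tofr_eq0 //.
  by rewrite /Xr /cstr /tofr tofracD tofracM tofracB.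
- by rewrite /Phatfun prodD /Xr /cstr /tofr tofracM tofracB.
by rewrite degv_mulXsubC_add.
Qed.

Theorem proposition1 (R : realType) (K : nat) (g : nat -> nat) (w : R[i])
    (y : nat -> nat -> R[i]) :
  (1 <= K)%N -> (forall i, (i < K)%N -> (0 < g i)%N) ->
  exists p ph : {poly {poly R[i]}},
    tofr p = Pfun K g w y /\ tofr ph = Phatfun K g w y /\
    degv p = degv ph /\
    (((deg_x p)%:R : rat), ((deg_xb p)%:R : rat)) = (EK K g, OK K g).
Proof.
move=> _ _; have [p [ph [eP ePh dp dph]]] := Pfun_Phatfun_degv K g w y.
exists p, ph; do 3!split=> //; first by rewrite dp dph.
by move: (lens_deg_EK_OK g K); rewrite -dp.
Qed.
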